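(* Let $K\in\mathcal S_n$ be nonempty and bounded and let $u\in S^{n-1}$. Assume that for every $x\in P_{u^\perp}(K)$, writing $K\cap(x+\mathbb Ru)=[x+su,x+tu]$, there exist $z,w\in\mathbb R^n$ such that the lens $L=B(z,1)\cap B(w,1)$ satisfies $K\subseteq L$, $x+tu\in\partial L$, $x+su\in\partial L$, and $S_u(L)\in\mathcal S_n$. Then $S_u(K)\in\mathcal S_n$.
   Context: For $x\in\mathbb R^n$, $B(x,1)$ is the closed Euclidean unit ball centered at $x$. The class $\mathcal S_n$ of ball-bodies consists of all intersections of families of closed Euclidean unit balls in $\mathbb R^n$. $P_{u^\perp}$ denotes orthogonal projection onto $u^\perp$. For a compact convex set $K$ and $u\in S^{n-1}$, for each $x\in P_{u^\perp}(K)$ write $K\cap(x+\mathbb Ru)=[x+a(x)u,x+b(x)u]$; the Steiner symmetral is $S_u(K)=\{x+yu: x\in P_{u^\perp}(K),\ |y|\le |b(x)-a(x)|/2\}$. *)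

From HB Require Import structures.
From mathcomp Require Import all_boot all_order all_algebra.
From mathcomp Require Import reals.
Set Implicit Arguments. Unset Strict Implicit. Unset Printing Implicit Defensive.
Import Order.TTheory GRing.Theory Num.Theory.
Local Open Scope ring_scope.

Section Defs.
Variables (R : realType) (n : nat).
Notation V := 'rV[R]_n.

Definition edot (x y : V) : R := (x *m y^T) 0 0.
Definition enorm (x : V) : R := Num.sqrt (edot x x).

Definition cball (c : V) : V -> Prop := fun y => enorm (y - c) <= 1.

Definition ball_body (K : V -> Prop) : Prop :=
  exists F : V -> Prop, forall y, K y <-> (forall c, F c -> cball c y).

Definition lens (z w : V) : V -> Prop := fun y => cball z y /\ cball w y.

Definition ebdry (L : V -> Prop) (p : V) : Prop :=
  forall e : R, 0 < e ->
    (exists y, enorm (y - p) < e /\ L y) /\ (exists y, enorm (y - p) < e /\ ~ L y).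

(* orthogonal projection onto u^perp (u a unit vector) *)
Definition proj_perp (u x : V) : V := x - edot x u *: u.

Definition in_proj (u : V) (K : V -> Prop) (x : V) : Prop :=
  exists k, K k /\ x = proj_perp u k.

(* Steiner symmetral (for compact convex K, where K ∩ (x+Ru) is a segment
   [x+a(x)u, x+b(x)u]):  x + y u with x ∈ P_{u^perp}(K) and |y| <= (b(x)-a(x))/2.
   Since the chord is the closed segment, |y| <= (b-a)/2 iff there are
   s,t with x+su, x+tu ∈ K and 2|y| <= t - s. *)
Definition steiner (u : V) (K : V -> Prop) : V -> Prop :=
  fun p => exists x y, in_proj u K x /\ p = x + y *: u /\
    exists s t, K (x + s *: u) /\ K (x + t *: u) /\ 2 * `|y| <= t - s.

Definition bounded_set (K : V -> Prop) : Prop :=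
  exists M : R, forall x, K x -> enorm x <= M.

End Defs.

From Pilot Require Import Defs.
From HB Require Import structures.
From mathcomp Require Import all_boot all_order all_algebra.
From mathcomp Require Import all_classical all_reals all_analysis.
From mathcomp Require Import ring lra.

(* Write a point outside S_u(K) as x + r u with x orthogonal to u.  It suffices to
   find a unit ball containing S_u(K) but not x + r u, and every unit ball B(c,1)
   containing K gives the unit ball B(P c,1) containing S_u(K), P the projection onto
   u^perp.
   Ball bodies are spindle convex: a point of a chord of K can be moved off the chord
   in any direction by an amount quadratic in the chord length without leaving K.
   Hence, if x is not in P(K), the point k0 of K with P k0 nearest to x is supported
   by the unit ball centred at k0 - v, v the unit vector from P k0 towards x, whose
   projected centre is farther than 1 from x.
   If the chord of K over x is [x + s u, x + t u] with s < t, the lens L of the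
   hypothesis has both endpoints on its boundary, so its own chord over x is no
   longer (otherwise an endpoint would be interior to L); as t - s < 2|r|, the point
   x + r u lies outside the ball body S_u(L), which contains S_u(K).
   If the chord is a single point, either K is that point, or moving x slightly away
   from the projection of another point of K leaves P(K), by spindle convexity again,
   and the first case applied at the moved point still separates x + r u. *)

Set Implicit Arguments. Unset Strict Implicit. Unset Printing Implicit Defensive.
Import Order.TTheory GRing.Theory Num.Theory.
Import numFieldNormedType.Exports.
Local Open Scope classical_set_scope.
Local Open Scope ring_scope.

Section BallBodies.
Variables (R : realType) (n : nat).
Notation V := 'rV[R]_n.
Implicit Types (x y z c u v w : V).

Lemma edotE x y : edot x y = \sum_j x 0 j * y 0 j.
Proof. by rewrite /edot !mxE; apply: eq_bigr => j _; rewrite mxE. Qed.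

Lemma edotC x y : edot x y = edot y x.
Proof. by rewrite !edotE; apply: eq_bigr => j _; rewrite mulrC. Qed.

Lemma edotDl x y z : edot (x + y) z = edot x z + edot y z.
Proof. by rewrite !edotE -big_split; apply: eq_bigr => j _; rewrite mxE mulrDl. Qed.

Lemma edotZl (k : R) x y : edot (k *: x) y = k * edot x y.
Proof. by rewrite !edotE mulr_sumr; apply: eq_bigr => j _; rewrite mxE mulrA. Qed.

Lemma edotNl x y : edot (- x) y = - edot x y.
Proof. by rewrite -scaleN1r edotZl mulN1r. Qed.

Lemma edotBl x y z : edot (x - y) z = edot x z - edot y z.
Proof. by rewrite edotDl edotNl. Qed.

Lemma edotDr x y z : edot z (x + y) = edot z x + edot z y.
Proof. by rewrite edotC edotDl !(edotC z). Qed.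

Lemma edotZr (k : R) x y : edot y (k *: x) = k * edot y x.
Proof. by rewrite edotC edotZl edotC. Qed.

Lemma edotNr x y : edot y (- x) = - edot y x.
Proof. by rewrite edotC edotNl edotC. Qed.

Lemma edotBr x y z : edot z (x - y) = edot z x - edot z y.
Proof. by rewrite edotDr edotNr. Qed.

Lemma edot0l x : edot 0 x = 0.
Proof. by rewrite -(scale0r 0) edotZl mul0r. Qed.

Lemma edot_ge0 x : 0 <= edot x x.
Proof. by rewrite edotE; apply: sumr_ge0 => j _; rewrite -expr2 sqr_ge0. Qed.

Lemma edot_eq0 x : edot x x = 0 -> x = 0.
Proof.
rewrite edotE => /eqP; rewrite psumr_eq0; last by move=> j _; rewrite -expr2 sqr_ge0.
move=> /allP x0; apply/rowP => j; rewrite mxE.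
have /x0 : j \in index_enum 'I_n by rewrite mem_index_enum.
by rewrite /= mulf_eq0 orbb => /eqP.
Qed.

Lemma edot_gt0 x : x != 0 -> 0 < edot x x.
Proof.
move=> x0; rewrite lt_neqAle edot_ge0 andbT eq_sym.
by apply: contra x0 => /eqP/edot_eq0 ->.
Qed.

Lemma sqr_coord_le_edot x (j : 'I_n) : x 0 j ^+ 2 <= edot x x.
Proof.
rewrite edotE (bigD1 j) //= -expr2 lerDl.
by apply: sumr_ge0 => i _; rewrite -expr2 sqr_ge0.
Qed.

Lemma edot_sqrD x y : edot (x + y) (x + y) = edot x x + 2 * edot x y + edot y y.
Proof. rewrite !(edotDl, edotDr) (edotC y x); ring. Qed.

Lemma edot_sqrB x y : edot (x - y) (x - y) = edot x x - 2 * edot x y + edot y y.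
Proof. rewrite !(edotBl, edotBr) (edotC y x); ring. Qed.

Lemma edot_sqrZ (k : R) x : edot (k *: x) (k *: x) = k ^+ 2 * edot x x.
Proof. rewrite edotZl edotZr; ring. Qed.

Lemma edot_young (t : R) x y : 2 * t * edot x y <= edot x x + t ^+ 2 * edot y y.
Proof. by have := edot_ge0 (x - t *: y); rewrite edot_sqrB edotZr edot_sqrZ; lra. Qed.

Lemma edot_gt1_perturb (b h : V) (r : R) : 1 < edot b b -> 4 * edot h h < r ^+ 4 ->
  1 < edot (b + h) (b + h) + r ^+ 2.
Proof.
have -> : r ^+ 4 = r ^+ 2 * r ^+ 2 by rewrite -exprD.
move=> B_gt1 H_lt.
have H_ge0 := edot_ge0 h; have sum_ge0 := edot_ge0 (b + h).
move: (sqr_ge0 r) H_lt; move: (r ^+ 2) => s s_ge0 H_lt.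
have [s_gt1|s_le1] := ltrP 1 s; first by lra.
have s_gt0 : 0 < s by nra.
have young : - (s * edot b h) <= edot h h + (s / 2) ^+ 2 * edot b b.
  by have := edot_young (s / 2) (- h) b; rewrite !(edotNl, edotNr) opprK (edotC h); lra.
rewrite edot_sqrD in sum_ge0 *.
have : 0 <= (edot b b - 1) * (s * (2 - s)) by rewrite mulr_ge0 ?mulr_ge0; lra.
have : 0 <= s * edot h h by rewrite mulr_ge0.
by nra.
Qed.

Lemma cballE c y : cball c y <-> edot (y - c) (y - c) <= 1.
Proof. by rewrite /cball /enorm -[X in _ <= X]sqrtr1 ler_sqrt. Qed.

Lemma enorm_lt_sqr x (e : R) : enorm x < e -> edot x x < e ^+ 2.
Proof.
rewrite /enorm -{2}(sqr_sqrtr (edot_ge0 x)) => lt_e.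
by have := sqrtr_ge0 (edot x x); nra.
Qed.

Lemma enorm_eq1 x : enorm x = 1 -> edot x x = 1.
Proof. by rewrite /enorm => x1; rewrite -(sqr_sqrtr (edot_ge0 x)) x1 expr1n. Qed.

Section Projection.
Variable u : V.
Hypothesis uu : edot u u = 1.

Lemma edot_sqrD_orth x (r : R) : edot x u = 0 ->
  edot (x + r *: u) (x + r *: u) = edot x x + r ^+ 2.
Proof. by move=> xu; rewrite edot_sqrD edotZr edot_sqrZ xu uu; ring. Qed.

Lemma edot_line x (r : R) : edot x u = 0 -> edot (x + r *: u) u = r.
Proof. by move=> xu; rewrite edotDl edotZl xu uu add0r mulr1. Qed.

Lemma proj_perp_orth x : edot (proj_perp u x) u = 0.
Proof. by rewrite /proj_perp edotBl edotZl uu mulr1 subrr. Qed.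

Lemma proj_perp_decomp x : x = proj_perp u x + edot x u *: u.
Proof. by rewrite /proj_perp subrK. Qed.

Lemma proj_perp_id x : edot x u = 0 -> proj_perp u x = x.
Proof. by move=> xu; rewrite /proj_perp xu scale0r subr0. Qed.

Lemma proj_perpDZ x (r : R) : proj_perp u (x + r *: u) = proj_perp u x.
Proof. by rewrite /proj_perp edotDl edotZl uu mulr1; apply/rowP => j; rewrite !mxE; ring. Qed.

Lemma proj_perp_comb x y (a b : R) :
  proj_perp u (a *: x + b *: y) = a *: proj_perp u x + b *: proj_perp u y.
Proof. by rewrite /proj_perp !(edotDl, edotZl); apply/rowP => j; rewrite !mxE; ring. Qed.

Lemma proj_perpB x y : proj_perp u (x - y) = proj_perp u x - proj_perp u y.
Proof. by rewrite /proj_perp edotBl; apply/rowP => j; rewrite !mxE; ring. Qed.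

Lemma edot_proj_perp x v : edot v u = 0 -> edot (proj_perp u x) v = edot x v.
Proof. by move=> vu; rewrite /proj_perp edotBl edotZl (edotC u) vu mulr0 subr0. Qed.

End Projection.

Lemma edot_continuous (f g : V -> V) : continuous f -> continuous g ->
  continuous (fun y => edot (f y) (g y)).
Proof.
move=> cf cg; have coord_cont (h : V -> V) j : continuous h -> continuous (fun y => h y 0 j).
  move=> ch z; apply: (@continuous_comp _ _ _ h (fun M : V => M 0 j) z (ch z)).
  exact: coord_continuous.
have -> : (fun y => edot (f y) (g y)) =
    (fun y => \sum_(j <- index_enum 'I_n) f y 0 j * g y 0 j).
  by apply: funext => y; rewrite edotE.
elim: (index_enum 'I_n) => [|j s IH].
  have -> : (fun y => \sum_(j <- [::]) f y 0 j * g y 0 j) = cst 0.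
    by apply: funext => y; rewrite big_nil.
  exact: cst_continuous.
have -> : (fun y => \sum_(i <- j :: s) f y 0 i * g y 0 i) =
    (fun y => f y 0 j * g y 0 j) + (fun y => \sum_(i <- s) f y 0 i * g y 0 i).
  by apply: funext => y; rewrite big_cons.
by move=> y; apply: continuousD; [apply: continuousM; apply: coord_cont | exact: IH].
Qed.

Lemma edot_continuousl u : continuous (fun x : V => edot x u).
Proof. by apply: edot_continuous => [y|]; [exact: cvg_id | exact: cst_continuous]. Qed.

Lemma proj_perp_continuous u : continuous (proj_perp u).
Proof.
move=> x; apply: (@continuousB _ _ _ id (fun y => edot y u *: u)); first exact: cvg_id.
apply: (@continuousZ _ _ _ (fun y => edot y u) (fun=> u)); first exact: edot_continuousl.
exact: cst_continuous.
Qed.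

Lemma proj_perp_dist_continuous u x :
  continuous (fun k => edot (proj_perp u k - x) (proj_perp u k - x)).
Proof.
have cP : continuous (fun k => proj_perp u k - x).
  by move=> k; apply: continuousB; [exact: proj_perp_continuous | exact: cst_continuous].
exact: edot_continuous.
Qed.

Lemma sublevel_closed (g : V -> R) (a : R) : continuous g -> closed [set y | g y <= a].
Proof.
have -> : [set y | g y <= a] = g @^-1` [set r | r <= a] by [].
by move/continuous_closedP; apply; exact: closed_le.
Qed.

Lemma compact_argmin (A : set V) (g : V -> R) : compact A -> (exists a, A a) ->
  continuous g -> exists a, A a /\ forall b, A b -> g a <= g b.
Proof.
move=> cA [a Aa] cg.
have cgA : {within A, continuous g} by apply: continuous_subspaceT.
have [c /set_mem Ac Hc] := @compact_EVT_min _ R g A (ex_intro _ a Aa) cA cgA.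
by exists c; split => // b Ab; apply: Hc; apply: mem_set.
Qed.

Lemma bounded_set_bounded (K : V -> Prop) : Defs.bounded_set K -> [bounded x | x in K].
Proof.
move=> [M0 HM0]; rewrite /bounded_near; near=> M => x Kx /=.
rewrite (_ : `|x| = mx_norm x) // mx_normrE.
apply/bigmax_leP; split => [|[i j] _]; first by near: M; apply: nbhs_pinfty_ge.
rewrite /= (ord1 i).
have coord_le : `|x 0 j| <= M0.
  have := HM0 _ Kx; rewrite /enorm; apply: le_trans.
  by rewrite -sqrtr_sqr; apply: ler_wsqrtr; exact: sqr_coord_le_edot.
by apply: le_trans coord_le _; near: M; apply: nbhs_pinfty_ge; exact: num_real.
Unshelve. all: by end_near.
Qed.

Lemma nearest_point_obtuse (C : V -> Prop) x p0 :
  (forall p q (mu : R), C p -> C q -> 0 <= mu <= 1 -> C (mu *: p + (1 - mu) *: q)) ->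
  C p0 -> (forall p, C p -> edot (p0 - x) (p0 - x) <= edot (p - x) (p - x)) ->
  forall p, C p -> 0 <= edot (p - p0) (p0 - x).
Proof.
move=> convC Cp0 p0_min p Cp; rewrite leNgt; apply/negP => b_lt0.
set b := edot (p - p0) (p0 - x) in b_lt0.
set W := edot (p - p0) (p - p0).
have W0 : 0 <= W := edot_ge0 _.
set mu := - b / (W - b).
have mu_gt0 : 0 < mu by rewrite divr_gt0 //; lra.
have mu_le1 : mu <= 1 by rewrite ler_pdivrMr ?mul1r; lra.
have mu01 : 0 <= mu <= 1 by rewrite (ltW mu_gt0) mu_le1.
have := p0_min _ (convC _ _ mu Cp Cp0 mu01).
have -> : mu *: p + (1 - mu) *: p0 - x = (p0 - x) + mu *: (p - p0).
  by apply/rowP => j; rewrite !mxE; ring.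
rewrite [X in _ <= X]edot_sqrD edotZr edot_sqrZ (edotC (p0 - x)) -/b -/W => p0_le.
have slope_ge0 : 0 <= 2 * b + mu * W by rewrite -(pmulr_rge0 _ mu_gt0); nra.
have : (W - b) * (2 * b + mu * W) = b * (W - 2 * b).
  have muWb : mu * (W - b) = - b by rewrite mulfVK // gt_eqF //; lra.
  have -> : (W - b) * (2 * b + mu * W) = 2 * b * (W - b) + mu * (W - b) * W by ring.
  by rewrite muWb; ring.
by nra.
Qed.

Lemma ball_bodyP (A : V -> Prop) : ball_body A <->
  forall y, ~ A y -> exists2 c, A `<=` cball c & ~ cball c y.
Proof.
split=> [[F AE] y Ay_false | separated].
  apply: contrapT => no_ball; apply/Ay_false/AE => c Fc.
  apply: contrapT => not_cy; apply: no_ball; exists c => // p /AE; exact.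
exists (fun c => A `<=` cball c) => y; split=> [Ay c|in_all]; first exact.
by apply: contrapT => /separated [c Ac]; apply; apply: in_all.
Qed.

Section BallBody.
Variables (K F : V -> Prop).
Hypothesis HK : forall y, K y <-> (forall c, F c -> cball c y).

Lemma ball_body_bulge k1 k2 (mu : R) e : K k1 -> K k2 -> 0 <= mu <= 1 -> edot e e <= 1 ->
  K (mu *: k1 + (1 - mu) *: k2 + (mu * (1 - mu) * edot (k1 - k2) (k1 - k2) / 2) *: e).
Proof.
move=> /HK k1_in /HK k2_in /andP[mu0 mu1] ee; apply/HK => c Fc.
have /cballE a1 := k1_in c Fc; have /cballE b1 := k2_in c Fc; apply/cballE.
set a := k1 - c in a1; set b := k2 - c in b1.
have -> : k1 - k2 = a - b by apply/rowP => j; rewrite !mxE; ring.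
set eta := mu * (1 - mu) * edot (a - b) (a - b).
set P := mu *: a + (1 - mu) *: b.
have -> : mu *: k1 + (1 - mu) *: k2 + (eta / 2) *: e - c = P + (eta / 2) *: e.
  by apply/rowP => j; rewrite !mxE; ring.
have P_le : edot P P <= 1 - eta.
  have -> : edot P P = mu * edot a a + (1 - mu) * edot b b - eta.
    rewrite (edot_sqrD (mu *: a)) !edot_sqrZ edotZl edotZr /eta edot_sqrB; ring.
  by nra.
have eta0 : 0 <= eta by rewrite !mulr_ge0 ?edot_ge0 //; lra.
rewrite edot_sqrD edotZr edot_sqrZ.
have := edot_young 1 P e; rewrite expr1n mul1r.
by have := edot_ge0 P; nra.
Qed.

Lemma ball_body_convex k1 k2 (mu : R) : K k1 -> K k2 -> 0 <= mu <= 1 ->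
  K (mu *: k1 + (1 - mu) *: k2).
Proof.
move=> k1_in k2_in mu01; have := ball_body_bulge (e := 0) k1_in k2_in mu01.
by rewrite edot0l ler01 scaler0 addr0; apply.
Qed.

Lemma ball_body_segment u x (s t r : R) : K (x + s *: u) -> K (x + t *: u) ->
  s <= r <= t -> K (x + r *: u).
Proof.
move=> Ks Kt /andP[sr rt].
have [st_eq|s_ne_t] := eqVneq s t.
  by have -> : r = s by move: rt; rewrite -st_eq; lra.
have st_gt0 : 0 < t - s by rewrite subr_gt0 lt_neqAle s_ne_t (le_trans sr rt).
set mu := (r - s) / (t - s).
have mu01 : 0 <= mu <= 1 by rewrite divr_ge0 ?ler_pdivrMr ?mul1r; lra.
have := ball_body_convex Kt Ks mu01.
suff -> : mu *: (x + t *: u) + (1 - mu) *: (x + s *: u) = x + r *: u by [].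
have -> : r = mu * t + (1 - mu) * s by rewrite /mu; field; rewrite gt_eqF.
by apply/rowP => j; rewrite !mxE; ring.
Qed.

Lemma ball_body_supporting_ball q v : K q -> edot v v = 1 ->
  (forall k, K k -> edot (k - q) v <= 0) -> K `<=` cball (q - v).
Proof.
move=> Kq vv normal k Kk; apply/cballE; rewrite leNgt; apply/negP.
have -> : k - (q - v) = (k - q) + v by apply/rowP => j; rewrite !mxE; ring.
rewrite edot_sqrD vv => far.
have a_le0 := normal k Kk.
set a := edot (k - q) v in a_le0 far.
set D := edot (k - q) (k - q) in far.
have D_gt0 : 0 < D by lra.
(* [lam] makes the [v]-component of the bulged point, [lam * (a / 2 + D / 4)],
   positive. *)
set lam := a / D + 1 / 2.
have lamD : lam * D = a + D / 2 by rewrite /lam mulrDl mulfVK ?gt_eqF //; field.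
have lam_gt0 : 0 < lam by rewrite -(pmulr_lgt0 _ D_gt0) lamD; lra.
have lam_le1 : lam <= 1 by rewrite -(ler_pM2r D_gt0) mul1r lamD; lra.
have lam01 : 0 <= lam <= 1 by rewrite (ltW lam_gt0) lam_le1.
have v_le1 : edot v v <= 1 by rewrite vv.
have /normal := ball_body_bulge Kk Kq lam01 v_le1.
have -> : lam *: k + (1 - lam) *: q + (lam * (1 - lam) * D / 2) *: v - q =
    lam *: (k - q) + (lam * (1 - lam) * D / 2) *: v.
  by apply/rowP => j; rewrite !mxE; ring.
by rewrite edotDl !edotZl vv -/a; nra.
Qed.

Lemma ball_body_closed : closed K.
Proof.
have -> : K = \bigcap_(c in F) [set y | edot (y - c) (y - c) <= 1].
  apply/seteqP; split => y /=.
    by move=> /HK Ky c Fc; apply/cballE; exact: Ky.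
  by move=> Ky; apply/HK => c Fc; apply/cballE; exact: Ky.
apply: closed_bigI => c _; apply: sublevel_closed.
by apply: edot_continuous => y; [apply: continuousB; [exact: cvg_id | exact: cst_continuous]..].
Qed.

Lemma ball_body_in_proj_convex u p q (mu : R) :
  in_proj u K p -> in_proj u K q -> 0 <= mu <= 1 -> in_proj u K (mu *: p + (1 - mu) *: q).
Proof.
move=> [k1 [K1 ->]] [k2 [K2 ->]] mu01; exists (mu *: k1 + (1 - mu) *: k2).
by split; [exact: ball_body_convex | rewrite proj_perp_comb].
Qed.

End BallBody.

Section Steiner.
Variable u : V.
Hypothesis uu : edot u u = 1.

Lemma steiner_sub (K L : V -> Prop) : K `<=` L -> steiner u K `<=` steiner u L.
Proof.
move=> KL p [x [y [[k [Kk xE]] [pE [s [t [Ks [Kt st]]]]]]]].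
exists x, y; split; first by exists k; split; [apply: KL|].
by split=> //; exists s, t; split; [apply: KL | split; [apply: KL|]].
Qed.

Lemma steiner_line (K : V -> Prop) x r : edot x u = 0 -> steiner u K (x + r *: u) ->
  exists s t, [/\ K (x + s *: u), K (x + t *: u) & 2 * `|r| <= t - s].
Proof.
move=> xu [x1 [y [[k [_ x1E]] [xrE [s [t [Ks [Kt yst]]]]]]]].
have x1u : edot x1 u = 0 by rewrite x1E proj_perp_orth.
have ry : r = y by have := congr1 (fun p => edot p u) xrE; rewrite /= !edot_line.
have xx1 : x = x1 by move: xrE; rewrite ry => /addIr.
by exists s, t; rewrite xx1 ry.
Qed.

Lemma steiner_sub_cball (K : V -> Prop) c :
  K `<=` cball c -> steiner u K `<=` cball (proj_perp u c).
Proof.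
move=> Kc p [x [y [[k0 [_ xE]] [-> [s [t [Ks [Kt yst]]]]]]]].
set g := x - proj_perp u c; set ga := edot c u.
have gu : edot g u = 0 by rewrite edotBl xE !proj_perp_orth // subrr.
have shift al : x + al *: u - c = g + (al - ga) *: u.
  by rewrite /g /ga /proj_perp; apply/rowP => j; rewrite !mxE; ring.
have /cballE := Kc _ Ks; have /cballE := Kc _ Kt.
rewrite !shift !edot_sqrD_orth // => t_in s_in; apply/cballE.
have -> : x + y *: u - proj_perp u c = g + y *: u by apply/rowP => j; rewrite !mxE; ring.
rewrite edot_sqrD_orth //.
have y2 : 4 * y ^+ 2 <= (t - s) ^+ 2 by rewrite -real_normK ?num_real //; have := normr_ge0 y; nra.
by have := sqr_ge0 ((t - ga) + (s - ga)); nra.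
Qed.

Lemma steiner_cball_separates (K : V -> Prop) c x r : edot x u = 0 ->
  K `<=` cball c -> 1 < edot (x - proj_perp u c) (x - proj_perp u c) + r ^+ 2 ->
  exists2 c', steiner u K `<=` cball c' & ~ cball c' (x + r *: u).
Proof.
move=> xu Kc far; exists (proj_perp u c); first exact: steiner_sub_cball.
move/cballE; have -> : x + r *: u - proj_perp u c = (x - proj_perp u c) + r *: u.
  by apply/rowP => j; rewrite !mxE; ring.
have orth : edot (x - proj_perp u c) u = 0 by rewrite edotBl xu proj_perp_orth // subrr.
by rewrite edot_sqrD_orth //; lra.
Qed.

Lemma steiner_point_separates (K : V -> Prop) x (s r : R) : edot x u = 0 ->
  K `<=` [set x + s *: u] -> r != 0 ->
  exists2 c, steiner u K `<=` cball c & ~ cball c (x + r *: u).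
Proof.
move=> xu K_pt r_ne0; have sg2 : Num.sg r ^+ 2 = 1 by rewrite sqr_sg r_ne0.
have on_pt a : K (x + a *: u) -> a = s.
  by move/K_pt/(congr1 (fun p => edot p u)); rewrite /= !edot_line.
exists (x - Num.sg r *: u).
  move=> _ [x1 [y [[k [/K_pt -> ->]] [-> [s1 [t1 [Ks1 [Kt1 y_le]]]]]]]].
  rewrite proj_perpDZ // proj_perp_id // in Ks1 Kt1 *.
  move: y_le; rewrite (on_pt _ Ks1) (on_pt _ Kt1) subrr => y_le.
  have -> : y = 0 by apply/normr0_eq0; have := normr_ge0 y; lra.
  apply/cballE; have -> : x + 0 *: u - (x - Num.sg r *: u) = Num.sg r *: u.
    by apply/rowP => j; rewrite !mxE; ring.
  by rewrite edot_sqrZ uu sg2 mulr1.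
move/cballE; have -> : x + r *: u - (x - Num.sg r *: u) = (r + Num.sg r) *: u.
  by apply/rowP => j; rewrite !mxE; ring.
rewrite edot_sqrZ uu mulr1 sqrrD sg2 [r * _]mulrC -normrEsg.
by have := sqr_ge0 r; have := normr_gt0 r; rewrite r_ne0; lra.
Qed.

End Steiner.

Lemma cball_chord_depth u z x (al be ga : R) : edot u u = 1 ->
  cball z (x + al *: u) -> cball z (x + be *: u) -> al < ga < be ->
  edot (x + ga *: u - z) (x + ga *: u - z) <= 1 - (ga - al) * (be - ga).
Proof.
move=> uu /cballE al_in /cballE be_in /andP[al_ga ga_be].
have quad (r : R) : edot (x + r *: u - z) (x + r *: u - z) =
    edot (x - z) (x - z) + 2 * r * edot (x - z) u + r ^+ 2.
  have -> : x + r *: u - z = (x - z) + r *: u by apply/rowP => j; rewrite !mxE; ring.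
  by rewrite edot_sqrD edotZr edot_sqrZ uu; ring.
move: al_in be_in; rewrite !quad.
set A := edot (x - z) (x - z); set B := edot (x - z) u => al_in be_in.
have be_al : 0 < be - al by lra.
rewrite -(ler_pM2l be_al).
have -> : (be - al) * (A + 2 * ga * B + ga ^+ 2) =
    (be - ga) * (A + 2 * al * B + al ^+ 2) + (ga - al) * (A + 2 * be * B + be ^+ 2)
    - (ga - al) * (be - ga) * (be - al) by ring.
have : (be - ga) * (A + 2 * al * B + al ^+ 2) <= be - ga by apply: ler_piMr; lra.
have : (ga - al) * (A + 2 * be * B + be ^+ 2) <= ga - al by apply: ler_piMr; lra.
by lra.
Qed.

Lemma cball_deep_nbhs z p (th : R) : 0 < th -> edot (p - z) (p - z) <= 1 - th ->
  forall y, edot (y - p) (y - p) < (th / 3) ^+ 2 -> cball z y.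
Proof.
move=> th_gt0 p_deep y y_near; apply/cballE.
have -> : y - z = (y - p) + (p - z) by apply/rowP => j; rewrite !mxE; ring.
rewrite edot_sqrD; have young := edot_young (th / 2) (y - p) (p - z).
move: y_near p_deep young.
have := edot_ge0 (p - z); have := edot_ge0 (y - p).
set Q := edot (y - p) (y - p); set X := edot (p - z) (p - z); set Y := edot (y - p) (p - z).
move=> Q_ge0 X_ge0 Q_lt X_le young.
have : 0 <= (th + 2) * ((th / 3) ^+ 2 - Q) by apply: mulr_ge0; lra.
have : 0 <= th * (1 + th / 2) * (1 - th - X) by apply: mulr_ge0; [apply: mulr_ge0|]; lra.
by nra.
Qed.

Lemma lens_chord_not_ebdry z w x u (al be ga : R) : edot u u = 1 ->
  lens z w (x + al *: u) -> lens z w (x + be *: u) -> al < ga < be ->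
  ~ ebdry (lens z w) (x + ga *: u).
Proof.
move=> uu [al_z al_w] [be_z be_w] al_ga_be bdry.
set th := (ga - al) * (be - ga).
have th_gt0 : 0 < th by case/andP: al_ga_be => ? ?; rewrite mulr_gt0 // subr_gt0.
have [_ [y [/enorm_lt_sqr y_near y_out]]] := bdry (th / 3) ltac:(lra).
by apply: y_out; split; apply: cball_deep_nbhs th_gt0 _ _ y_near; apply: cball_chord_depth.
Qed.

Lemma lens_steiner_separates (K : V -> Prop) u z w x (s t r : R) :
  edot u u = 1 -> edot x u = 0 -> s < t -> t - s < 2 * `|r| ->
  K (x + s *: u) -> K (x + t *: u) -> K `<=` lens z w ->
  ebdry (lens z w) (x + t *: u) -> ebdry (lens z w) (x + s *: u) ->
  ball_body (steiner u (lens z w)) ->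
  exists2 c, steiner u K `<=` cball c & ~ cball c (x + r *: u).
Proof.
move=> uu xu lt_st short Ks Kt KL t_bdry s_bdry /ball_bodyP SL_bb.
have [|c SLc not_c] := SL_bb (x + r *: u); last by exists c => // p /(steiner_sub KL)/SLc.
move=> /(steiner_line uu xu) [s1 [t1 [Ls1 Lt1 long]]].
have [t_lt_t1|t1_le_t] := ltrP t t1.
  by apply: (lens_chord_not_ebdry uu (KL _ Ks) Lt1 _ t_bdry); rewrite lt_st t_lt_t1.
apply: (lens_chord_not_ebdry uu Ls1 (KL _ Kt) _ s_bdry); rewrite lt_st andbT.
by have := normr_ge0 r; lra.
Qed.

Section BoundedBallBody.
Variables (K F : V -> Prop) (u : V).
Hypothesis HK : forall y, K y <-> (forall c, F c -> cball c y).
Hypothesis K_bounded : Defs.bounded_set K.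
Hypothesis uu : edot u u = 1.

Lemma ball_body_compact : compact K.
Proof.
exact: bounded_closed_compact (bounded_set_bounded K_bounded) (ball_body_closed HK).
Qed.

Lemma ball_body_chord x : in_proj u K x -> exists s t, [/\ s <= t, K (x + s *: u),
  K (x + t *: u) & forall y, (K y /\ exists r, y = x + r *: u) <->
                             (exists r, s <= r <= t /\ y = x + r *: u)].
Proof.
case=> k0 [Kk0 xE]; have xu : edot x u = 0 by rewrite xE proj_perp_orth.
set fibre := K `&` [set k | edot (proj_perp u k - x) (proj_perp u k - x) <= 0].
have fibre_compact : compact fibre.
  apply: compact_closedI; first exact: ball_body_compact.
  exact/sublevel_closed/proj_perp_dist_continuous.
have fibre_ne : exists a, fibre a by exists k0; split => //=; rewrite -xE subrr edot0l.
have fibreE k : fibre k <-> K k /\ exists r, k = x + r *: u.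
  split=> [[Kk /= k_le0]|[Kk [r kE]]]; last first.
    by split; rewrite -?kE //= kE proj_perpDZ // proj_perp_id // subrr edot0l.
  have /edot_eq0/eqP : edot (proj_perp u k - x) (proj_perp u k - x) = 0.
    by apply/eqP; rewrite eq_le k_le0 edot_ge0.
  rewrite subr_eq0 => /eqP Pk.
  by split => //; exists (edot k u); rewrite {1}(proj_perp_decomp u k) Pk.
have [kmin [fibre_min kmin_le]] :=
  compact_argmin fibre_compact fibre_ne (edot_continuousl (u := u)).
have cN : continuous (fun k => - edot k u).
  by move=> k; apply: (@continuousN _ _ _ (fun k => edot k u)); exact: edot_continuousl.
have [kmax [fibre_max kmax_ge]] := compact_argmin fibre_compact fibre_ne cN.
have [Kmin [s kminE]] := (fibreE _).1 fibre_min.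
have [Kmax [t kmaxE]] := (fibreE _).1 fibre_max.
have fibre_between r : fibre (x + r *: u) -> s <= r <= t.
  move=> fibre_r; have := kmin_le _ fibre_r; have := kmax_ge _ fibre_r.
  by rewrite kminE kmaxE !edot_line // lerN2 => -> ->.
have /andP[st _] : s <= t <= t by apply: fibre_between; rewrite -kmaxE.
have Ks : K (x + s *: u) by rewrite -kminE.
have Kt : K (x + t *: u) by rewrite -kmaxE.
exists s, t; split=> // y; split=> [/fibreE fibre_y|[r [r_st ->]]].
  have [_ [r yE]] := (fibreE _).1 fibre_y.
  by exists r; split => //; apply: fibre_between; rewrite -yE.
by split; [exact: (ball_body_segment HK Ks Kt r_st) | exists r].
Qed.

Lemma ball_body_far_ball x : edot x u = 0 -> ~ in_proj u K x -> (exists k, K k) ->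
  exists c, K `<=` cball c /\
            1 < edot (x - proj_perp u c) (x - proj_perp u c).
Proof.
move=> xu x_off K_ne.
have [k0 [Kk0 k0_min]] := compact_argmin ball_body_compact K_ne
  (proj_perp_dist_continuous (u := u) (x := x)).
set e := proj_perp u k0 - x.
have e_ne0 : e != 0.
  by apply/eqP => /eqP; rewrite subr_eq0 => /eqP Pk0; apply: x_off; exists k0.
have eu : edot e u = 0 by rewrite edotBl proj_perp_orth // xu subrr.
set D := edot e e; have D_gt0 : 0 < D := edot_gt0 e_ne0.
set lam := (Num.sqrt D)^-1.
have lam_gt0 : 0 < lam by rewrite invr_gt0 sqrtr_gt0.
have lamD : lam ^+ 2 * D = 1 by rewrite exprVn sqr_sqrtr ?mulVf ?gt_eqF // ltW.
set v := (- lam) *: e.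
have vu : edot v u = 0 by rewrite edotZl eu mulr0.
have vv : edot v v = 1 by rewrite edot_sqrZ sqrrN.
have obtuse k : K k -> 0 <= edot (proj_perp u k - proj_perp u k0) e.
  move=> Kk; apply: (nearest_point_obtuse (ball_body_in_proj_convex HK (u := u))).
  - by exists k0.
  - by move=> _ [k' [Kk' ->]]; exact: k0_min.
  - by exists k.
exists (k0 - v); split.
  apply: (ball_body_supporting_ball HK Kk0 vv) => k Kk.
  rewrite -(edot_proj_perp _ vu) proj_perpB // edotZr mulNr oppr_le0.
  by rewrite mulr_ge0 ?obtuse // ltW.
have -> : x - proj_perp u (k0 - v) = (- (1 + lam)) *: e.
  by rewrite proj_perpB // (proj_perp_id vu); apply/rowP => j; rewrite !mxE; ring.
by rewrite edot_sqrZ sqrrN -/D; nra.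
Qed.

Lemma ball_body_push_off_proj x (s lam : R) k1 :
  (forall k, K k -> proj_perp u k = x -> k = x + s *: u) ->
  K k1 -> proj_perp u k1 != x -> 0 < lam ->
  ~ in_proj u K (x - lam *: (proj_perp u k1 - x)).
Proof.
move=> on_line Kk1 Pk1_ne lam_gt0 [k2 [Kk2 Pk2]].
set w := proj_perp u k1 - x in Pk2.
have w_ne0 : w != 0 by rewrite subr_eq0.
have lam1_gt0 : 0 < 1 + lam by lra.
set mu := lam / (1 + lam).
have mu_lam : mu * (1 + lam) = lam by rewrite mulfVK // gt_eqF.
have mu_gt0 : 0 < mu by rewrite divr_gt0 //; lra.
have mu_lt1 : mu < 1 by rewrite ltr_pdivrMr; lra.
have mu01 : 0 <= mu <= 1 by rewrite ltW // ltW.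
have k12 : k1 - k2 != 0.
  rewrite subr_eq0; apply: contra w_ne0 => /eqP k12.
  have /eqP : (1 + lam) *: w = 0.
    have -> : (1 + lam) *: w = proj_perp u k1 - proj_perp u k2.
      by rewrite -Pk2 /w; apply/rowP => j; rewrite !mxE; ring.
    by rewrite k12 subrr.
  by rewrite scaler_eq0 (gt_eqF lam1_gt0).
set kc := mu *: k1 + (1 - mu) *: k2.
have P_kc : proj_perp u kc = x.
  rewrite proj_perp_comb -Pk2 -[proj_perp u k1](subrK x) -/w.
  have -> : mu *: (w + x) + (1 - mu) *: (x - lam *: w) = x + (mu * (1 + lam) - lam) *: w.
    by apply/rowP => j; rewrite !mxE; ring.
  by rewrite mu_lam subrr scale0r addr0.
set d := mu * (1 - mu) * edot (k1 - k2) (k1 - k2) / 2.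
have d_gt0 : 0 < d.
  by apply: divr_gt0 => //; apply: mulr_gt0; [apply: mulr_gt0; lra | exact: edot_gt0].
have u_le1 : edot u u <= 1 by rewrite uu.
have Nu_le1 : edot (- u) (- u) <= 1 by rewrite edotNl edotNr opprK uu.
have up := on_line _ (ball_body_bulge HK Kk1 Kk2 mu01 u_le1).
have down := on_line _ (ball_body_bulge HK Kk1 Kk2 mu01 Nu_le1).
rewrite -/kc -/d scalerN -scaleNr !proj_perpDZ // P_kc in up down.
have := congr1 (fun p => edot p u) (etrans (up erefl) (esym (down erefl))).
by rewrite !edotDl !edotZl uu; lra.
Qed.

Lemma ball_body_point_chord_separates x (s r : R) : in_proj u K x ->
  (forall y, (K y /\ exists a, y = x + a *: u) <-> (exists a, s <= a <= s /\ y = x + a *: u)) ->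
  r != 0 -> exists2 c, steiner u K `<=` cball c & ~ cball c (x + r *: u).
Proof.
move=> [kx [Kkx xE]] chordE r_ne0.
have xu : edot x u = 0 by rewrite xE proj_perp_orth.
have on_line k : K k -> proj_perp u k = x -> k = x + s *: u.
  move=> Kk Pk; have kE : k = x + edot k u *: u by rewrite {1}(proj_perp_decomp u k) Pk.
  have [a [/andP[s_le a_le] ->]] := (chordE k).1 (conj Kk (ex_intro _ _ kE)).
  by have -> : a = s by lra.
have [K_on_line|] := pselect (forall k, K k -> proj_perp u k = x).
  by apply: (steiner_point_separates uu xu _ r_ne0) => k Kk; apply: on_line (K_on_line k Kk).
move/existsNP => [k1 /not_implyP [Kk1 /eqP Pk1_ne]].
set w := proj_perp u k1 - x; set W := edot w w; have W_ge0 : 0 <= W := edot_ge0 w.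
have r2_gt0 : 0 < r ^+ 2 by rewrite exprn_even_gt0.
(* Small enough for [edot_gt1_perturb]: [4 * edot (lam *: w) (lam *: w) < r ^+ 4]. *)
set lam := r ^+ 2 / (2 * (W + 1)).
have lamW : lam * (2 * (W + 1)) = r ^+ 2 by rewrite mulfVK // gt_eqF //; lra.
have lam_gt0 : 0 < lam by rewrite divr_gt0 //; lra.
have x'_off := ball_body_push_off_proj on_line Kk1 Pk1_ne lam_gt0.
set x' := x - lam *: w in x'_off.
have wu : edot w u = 0 by rewrite edotBl proj_perp_orth // xu subrr.
have x'u : edot x' u = 0 by rewrite edotBl edotZl wu xu mulr0 subrr.
have [c [Kc far]] := ball_body_far_ball x'u x'_off (ex_intro _ k1 Kk1).
apply: (steiner_cball_separates uu xu Kc).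
have -> : x - proj_perp u c = (x' - proj_perp u c) + lam *: w.
  by apply/rowP => j; rewrite !mxE; ring.
apply: edot_gt1_perturb far _; rewrite edot_sqrZ.
have -> : r ^+ 4 = (lam * (2 * (W + 1))) ^+ 2 by rewrite lamW -exprM.
rewrite -subr_gt0.
have -> : (lam * (2 * (W + 1))) ^+ 2 - 4 * (lam ^+ 2 * W) =
  4 * (lam ^+ 2 * ((W + 1) ^+ 2 - W)) by ring.
by apply: mulr_gt0 => //; apply: mulr_gt0; [exact: exprn_gt0 | nra].
Qed.

End BoundedBallBody.

End BallBodies.

Theorem proposition4p2 (R : realType) (n : nat) (K : 'rV[R]_n -> Prop)
  (u : 'rV[R]_n) :
  ball_body K -> (exists x, K x) -> Defs.bounded_set K -> enorm u = 1 ->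
  (forall (x : 'rV[R]_n) (s t : R), in_proj u K x ->
     (forall y, (K y /\ exists r : R, y = x + r *: u) <->
                (exists r : R, s <= r <= t /\ y = x + r *: u)) ->
     exists z w : 'rV[R]_n,
       (forall y, K y -> lens z w y) /\
       ebdry (lens z w) (x + t *: u) /\
       ebdry (lens z w) (x + s *: u) /\
       ball_body (steiner u (lens z w))) ->
  ball_body (steiner u K).
Proof.
move=> [F HK] K_ne K_bounded /enorm_eq1 uu lens_hyp; apply/ball_bodyP => y y_out.
have xu := proj_perp_orth uu y.
rewrite (proj_perp_decomp u y) in y_out *.
move: (proj_perp u y) (edot y u) xu y_out => x r xu y_out.
have [x_in|x_off] := pselect (in_proj u K x); last first.
  have [c [Kc far]] := ball_body_far_ball HK K_bounded uu xu x_off K_ne.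
  by apply: (steiner_cball_separates uu xu Kc); have := sqr_ge0 r; lra.
have [s [t [st Ks Kt chordE]]] := ball_body_chord HK K_bounded uu x_in.
have short : t - s < 2 * `|r|.
  rewrite ltNge; apply/negP => long; apply: y_out; exists x, r.
  by split=> //; split=> //; exists s, t.
move: st; rewrite le_eqVlt => /orP[/eqP eq_st|lt_st].
  subst t; apply: (ball_body_point_chord_separates HK K_bounded uu x_in chordE).
  by rewrite -normr_gt0; lra.
have [z [w [KL [t_bdry [s_bdry SL_bb]]]]] := lens_hyp x s t x_in chordE.
exact: lens_steiner_separates uu xu lt_st short Ks Kt KL t_bdry s_bdry SL_bb.
Qed.
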